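(* Let $j,k$ be natural numbers with $0<j<k$ and let $a_0,a_1,a_2,b_0,b_1,b_2$ be real numbers with $a_1+a_2=0$ and $b_1+b_2=0$ (equivalently $A(0)=A(1)$ and $B(0)=B(1)$ for $A(t)=a_0+a_1t^j+a_2t^k$, $B(t)=b_0+b_1t^j+b_2t^k$). Consider the Abel equation $$\frac{dx}{dt}=(a_0+a_1t^j+a_2t^k)x^3+(b_0+b_1t^j+b_2t^k)x^2,\qquad t\in[0,1],$$ and assume it does not have a center at $x=0$. Then it has at most one non-zero periodic orbit, and when this periodic orbit exists it is hyperbolic.
   Context: A periodic orbit is a solution $x(t)$ defined on all of $[0,1]$ with $x(0)=x(1)$; $x\equiv0$ is always one, and non-zero periodic orbits are the others. The Poincaré map is $\Pi(x_0)=x(1;x_0)$ where $x(t;x_0)$ is the solution with $x(0;x_0)=x_0$; a periodic orbit with initial condition $x_0$ is hyperbolic if $\Pi'(x_0)\ne1$. The equation has a center at $x=0$ if there is a neighborhood of $0$ such that every solution starting at $t=0$ in this neighborhood is a periodic orbit. *)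

From Stdlib Require Import Reals.
From Coquelicot Require Import Coquelicot.
Open Scope R_scope.

Definition rhs := R -> R -> R.

(* x is a solution of dx/dt = F(t,x) on [0,1]: at every t in [0,1], x is
   differentiable with derivative F t (x t).  (Two-sided derivatives at the
   endpoints: any solution on [0,1] extends slightly beyond [0,1] since F is
   smooth, so this is equivalent to the one-sided version.) *)
Definition is_solution (F : rhs) (x : R -> R) : Prop :=
  forall t, 0 <= t <= 1 -> is_derive x t (F t (x t)).

Definition periodic_orbit (F : rhs) (x : R -> R) : Prop :=
  is_solution F x /\ x 0 = x 1.

(* Graph of the Poincaré map: Pi(x0) = y iff the solution starting at x0
   at t = 0 is defined on [0,1] and x(1) = y. *)
Definition poincare_rel (F : rhs) (x0 y : R) : Prop :=
  exists x, is_solution F x /\ x 0 = x0 /\ x 1 = y.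

Definition hyperbolic (F : rhs) (x0 : R) : Prop :=
  exists (P : R -> R) (d : R), 0 < d /\
    (forall z, Rabs (z - x0) < d -> poincare_rel F z (P z)) /\
    exists l, is_derive P x0 l /\ l <> 1.

Definition has_center (F : rhs) : Prop :=
  exists d, 0 < d /\
    forall z, Rabs z < d ->
      (exists x, is_solution F x /\ x 0 = z) /\
      (forall x, is_solution F x -> x 0 = z -> x 1 = z).

Definition abel_rhs (j k : nat) (a0 a1 a2 b0 b1 b2 : R) : rhs :=
  fun t x => (a0 + a1 * t ^ j + a2 * t ^ k) * x ^ 3
           + (b0 + b1 * t ^ j + b2 * t ^ k) * x ^ 2.

(* Since A(0) = A(1) and B(0) = B(1), we have A = a0 + a1 phi and B = b0 + b1 phi with
   phi(t) = t^j - t^k, so some nontrivial combination of A and B is constant: A = a0 if a1 = 0,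
   and B + xs A = m with xs = -b1/a1 otherwise. Accordingly the field splits as
   alpha(t) f(x) + c g(x), with (alpha, f, c, g) = (B, x^2, a0, x^3) or (A, x^2 (x - xs), m, x^2).
   If H' = 1/f and P' = alpha, then H(x(t)) - P(t) has derivative c g(x)/f(x) along solutions
   avoiding the zeros of f.

   If c = 0 the equation is separable: either P(1) = P(0) and every orbit near 0 is periodic
   (a center), or every non-zero periodic orbit is the constant orbit x = xs, whose multiplier
   exp(xs^2 (P(1) - P(0))) is not 1.

   If c <> 0, periodic orbits avoid the zeros of f (for f = x^2 (x - xs) because F(t, xs) = m xs^2
   has a constant sign). For two periodic orbits x and y, H(x) - H(y) is periodic with derivative
   c (g/f (x) - g/f (y)) and g/f is injective, so by Rolle x and y meet, hence coincide. Finally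
   Pi'(x(0)) = exp (int_0^1 dF/dx(t, x(t)) dt), and dF/dx - d/dt (ln |f(x)|) = c (g' f - f' g)(x) / f(x)
   never vanishes along the orbit, so the integral is not 0. *)

From Stdlib Require Import Reals Lra Lia Psatz Classical_Prop.
From Coquelicot Require Import Coquelicot.
Open Scope R_scope.

Ltac unfold_ops :=
  unfold scal, plus, opp, minus, mult, zero, one; simpl; unfold mult, plus, opp, zero, one; simpl.

(** * Real-analysis preliminaries *)

Lemma is_derive_continuous (f : R -> R) t l : is_derive f t l -> continuous f t.
Proof. intros H. apply (ex_derive_continuous (K := R_AbsRing) (V := R_NormedModule)). now exists l. Qed.

Lemma is_derive_continuity_pt (f : R -> R) t l : is_derive f t l -> continuity_pt f t.
Proof. intros H. apply continuity_pt_filterlim, (is_derive_continuous f t l H). Qed.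

Lemma is_derive_eq (f : R -> R) t l l' : is_derive f t l -> l = l' -> is_derive f t l'.
Proof. now intros H <-. Qed.

Lemma MVT_interval (f df : R -> R) a b : a <= b ->
  (forall t, a <= t <= b -> is_derive f t (df t)) ->
  exists c, a <= c <= b /\ f b - f a = df c * (b - a).
Proof.
  intros Hab Hd.
  destruct (MVT_gen f a b df) as [c [Hc E]]; rewrite ?Rmin_left, ?Rmax_right in *; try lra.
  - intros t Ht; apply Hd; lra.
  - intros t Ht; apply (is_derive_continuity_pt f t (df t)), Hd; lra.
  - now exists c.
Qed.

Lemma derive_zero_constant (f : R -> R) a b : a <= b ->
  (forall t, a <= t <= b -> is_derive f t 0) -> f b = f a.
Proof.
  intros Hab Hd. destruct (MVT_interval f (fun _ => 0) a b Hab Hd) as [c [_ E]]. lra.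
Qed.

Lemma rolle01 (f df : R -> R) : (forall t, 0 <= t <= 1 -> is_derive f t (df t)) ->
  f 0 = f 1 -> exists c, 0 <= c <= 1 /\ df c = 0.
Proof.
  intros Hd Hp. destruct (MVT_interval f df 0 1 ltac:(lra) Hd) as [c [Hc E]].
  exists c. split; [exact Hc | nra].
Qed.

Lemma bounded_on_01 (x : R -> R) : (forall t, 0 <= t <= 1 -> continuous x t) ->
  exists M, forall t, 0 <= t <= 1 -> Rabs (x t) <= M.
Proof.
  intros Hc.
  destruct (continuity_ab_maj (fun t => Rabs (x t)) 0 1) as [m [Hm _]]; [lra | |].
  - intros t Ht. apply (continuity_pt_comp x Rabs).
    + now apply continuity_pt_filterlim, Hc.
    + apply Rcontinuity_abs.
  - now exists (Rabs (x m)).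
Qed.

(* Solutions are only constrained on [0, 1]; composing with [clamp] extends a function
   continuous on [0, 1] to a function continuous on all of R. *)
Definition clamp t := Rmax 0 (Rmin 1 t).

Lemma clamp_in t : 0 <= clamp t <= 1.
Proof. unfold clamp, Rmax, Rmin; repeat destruct Rle_dec; lra. Qed.

Lemma clamp_id t : 0 <= t <= 1 -> clamp t = t.
Proof. unfold clamp, Rmax, Rmin; repeat destruct Rle_dec; lra. Qed.

Lemma clamp_lipschitz a b : Rabs (clamp a - clamp b) <= Rabs (a - b).
Proof. unfold clamp, Rmax, Rmin; repeat destruct Rle_dec; unfold Rabs; repeat destruct Rcase_abs; lra. Qed.

Lemma continuous_clamp t : continuous clamp t.
Proof.
  apply continuity_pt_filterlim. intros eps Heps. exists eps. split; [exact Heps |].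
  intros s [_ Hs]. eapply Rle_lt_trans; [apply clamp_lipschitz | exact Hs].
Qed.

Lemma continuous_clamp_comp (x : R -> R) t :
  (forall s, 0 <= s <= 1 -> continuous x s) -> continuous (fun s => x (clamp s)) t.
Proof. intros H. apply (continuous_comp clamp x); [apply continuous_clamp | apply H, clamp_in]. Qed.

Lemma continuous_Rplus (f g : R -> R) t : continuous f t -> continuous g t -> continuous (fun s => f s + g s) t.
Proof. intros; now apply (continuous_plus (V := R_NormedModule)). Qed.

Lemma continuous_Rmult (f g : R -> R) t : continuous f t -> continuous g t -> continuous (fun s => f s * g s) t.
Proof. intros; now apply (continuous_mult (K := R_AbsRing)). Qed.

Lemma continuous_Rpow (f : R -> R) n t : continuous f t -> continuous (fun s => f s ^ n) t.
Proof.
  intros Hf. induction n as [| n IH]; [apply continuous_const |]. now apply continuous_Rmult.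
Qed.

Lemma Rabs_mult_le a b a' b' : Rabs a <= a' -> Rabs b <= b' -> Rabs (a * b) <= a' * b'.
Proof. intros Ha Hb. rewrite Rabs_mult. apply Rmult_le_compat; auto using Rabs_pos. Qed.

Lemma exp_monotone x y : x <= y -> exp x <= exp y.
Proof. intros [H | ->]; [left; now apply exp_increasing | right; reflexivity]. Qed.

Lemma intermediate_value_01 (x : R -> R) w : (forall t, 0 <= t <= 1 -> continuous x t) ->
  Rmin (x 0) (x 1) <= w <= Rmax (x 0) (x 1) -> exists tau, 0 <= tau <= 1 /\ x tau = w.
Proof.
  intros Hx Hw.
  assert (E : forall t, 0 <= t <= 1 -> x (clamp t) = x t) by (intros; now rewrite clamp_id).
  destruct (IVT_gen_consistent (fun t => x (clamp t)) 0 1 w (fun t => continuous_clamp_comp x t Hx))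
    as [tau [Htau Hxw]].
  - now rewrite !E by lra.
  - rewrite Rmin_left, Rmax_right in Htau by lra. exists tau. split; [exact Htau |]. now rewrite <- E.
Qed.

Lemma ex_RInt_continuous_R (f : R -> R) a b : (forall s, continuous f s) -> ex_RInt f a b.
Proof. intros H. apply (ex_RInt_continuous (V := R_CompleteNormedModule)). intros; apply H. Qed.

Lemma is_derive_RInt_upper (f : R -> R) a t : (forall s, continuous f s) ->
  is_derive (fun u => RInt f a u) t (f t).
Proof.
  intros Hf. apply (is_derive_RInt f (fun u => RInt f a u) a t); [| apply Hf].
  apply filter_forall. intros u. now apply (RInt_correct (V := R_CompleteNormedModule)), ex_RInt_continuous_R.
Qed.

Lemma RInt_abs_diff_le (g1 g2 b : R -> R) c : 0 <= c ->
  (forall s, continuous g1 s) -> (forall s, continuous g2 s) -> (forall s, continuous b s) ->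
  (forall s, 0 <= s <= c -> Rabs (g1 s - g2 s) <= b s) ->
  Rabs (RInt g1 0 c - RInt g2 0 c) <= RInt b 0 c.
Proof.
  intros Hc H1 H2 Hb Hle.
  assert (Hd : forall s, continuous (fun x => g1 x - g2 x) s).
  { intros s. apply (continuous_minus (V := R_NormedModule)); auto. }
  rewrite <- (RInt_minus (V := R_CompleteNormedModule)) by now apply ex_RInt_continuous_R.
  eapply Rle_trans; [apply abs_RInt_le; [exact Hc | now apply ex_RInt_continuous_R] |].
  apply RInt_le; [exact Hc | | now apply ex_RInt_continuous_R |].
  - apply ex_RInt_continuous_R. intros s. apply (continuous_comp _ Rabs); [apply Hd | apply continuous_Rabs].
  - intros s Hs. apply Hle. lra.
Qed.

Lemma is_lim_seq_halving (C : R) : is_lim_seq (fun n => C * (/2) ^ n) 0.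
Proof.
  rewrite <- (Rmult_0_r C). apply (is_lim_seq_scal_l _ C 0), is_lim_seq_geom.
  rewrite Rabs_right; lra.
Qed.

Lemma geometric_zero (a C : R) : (forall n, Rabs a <= C * (/2) ^ n) -> a = 0.
Proof.
  intros H. assert (Hlim := is_lim_seq_halving C).
  assert (Hle := is_lim_seq_le (fun _ => Rabs a) _ (Rabs a) 0 H (is_lim_seq_const _) Hlim).
  simpl in Hle. apply Rabs_eq_0. assert (Habs := Rabs_pos a). lra.
Qed.

Lemma geometric_cauchy (u : nat -> R) (D : R) : (forall n, Rabs (u (S n) - u n) <= D * (/2) ^ n) ->
  forall n k, Rabs (u (k + n)%nat - u n) <= 2 * D * (/2) ^ n.
Proof.
  intros H n.
  assert (Hpartial : forall k, Rabs (u (k + n)%nat - u n) <= 2 * D * ((/2) ^ n - (/2) ^ (k + n))).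
  { induction k as [| k IH].
    - simpl. rewrite Rminus_eq_0, Rabs_R0. lra.
    - specialize (H (k + n)%nat). simpl.
      replace (u (S (k + n)) - u n) with ((u (S (k + n)) - u (k + n)%nat) + (u (k + n)%nat - u n)) by ring.
      eapply Rle_trans; [apply Rabs_triang | lra]. }
  intros k. specialize (Hpartial k).
  assert (0 <= D) by (specialize (H O); simpl in H; assert (Habs := Rabs_pos (u 1%nat - u O)); lra).
  assert (0 < (/2) ^ (k + n)) by (apply pow_lt; lra).
  nra.
Qed.

Lemma lim_geometric (u : nat -> R) (D : R) : (forall n, Rabs (u (S n) - u n) <= D * (/2) ^ n) ->
  forall n, Rabs (real (Lim_seq u) - u n) <= 2 * D * (/2) ^ n.
Proof.
  intros H. assert (Hcauchy := geometric_cauchy u D H).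
  assert (Hex : ex_finite_lim_seq u).
  { apply ex_lim_seq_cauchy_corr. intros e.
    assert (Hlim := is_lim_seq_halving (2 * D)). apply is_lim_seq_spec in Hlim.
    destruct (Hlim e) as [N HN].
    assert (Hb : forall p q, (N <= p)%nat -> (p <= q)%nat -> Rabs (u q - u p) < e).
    { intros p q Hp Hpq. replace q with ((q - p) + p)%nat by lia.
      eapply Rle_lt_trans; [apply Hcauchy |]. specialize (HN p Hp).
      rewrite Rminus_0_r in HN. eapply Rle_lt_trans; [apply RRle_abs | exact HN]. }
    exists N. intros n m Hn Hm. destruct (Nat.le_ge_cases n m).
    - rewrite Rabs_minus_sym. now apply Hb.
    - now apply Hb. }
  intros n. destruct Hex as [l Hl]. rewrite (is_lim_seq_unique _ _ Hl). simpl.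
  apply (is_lim_seq_incr_n _ n) in Hl.
  assert (Hup := is_lim_seq_le _ (fun _ => u n + 2 * D * (/2) ^ n) _ _
    (fun k => proj2 (proj1 (Rabs_le_between' _ _ _) (Hcauchy n k))) Hl (is_lim_seq_const _)).
  assert (Hlow := is_lim_seq_le (fun _ => u n - 2 * D * (/2) ^ n) _ _ _
    (fun k => proj1 (proj1 (Rabs_le_between' _ _ _) (Hcauchy n k))) (is_lim_seq_const _) Hl).
  simpl in Hup, Hlow. apply Rabs_le_between'. lra.
Qed.

Lemma uniform_limit_continuous (u : nat -> R -> R) (f : R -> R) (E : nat -> R) :
  (forall n t, continuous (u n) t) -> (forall n t, Rabs (f t - u n t) <= E n) ->
  is_lim_seq E 0 -> forall t, continuous f t.
Proof.
  intros Hu Hf HE t. apply is_lim_seq_spec in HE.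
  apply continuity_pt_filterlim.
  apply (CVU_continuity u f t (mkposreal 1 Rlt_0_1)).
  - intros e He. destruct (HE (mkposreal e He)) as [N HN]. exists N. intros n y Hn _.
    eapply Rle_lt_trans; [apply Hf |]. specialize (HN n Hn). simpl in HN.
    rewrite Rminus_0_r in HN. eapply Rle_lt_trans; [apply RRle_abs | exact HN].
  - intros n y _. apply continuity_pt_filterlim, Hu.
  - unfold Boule. simpl. rewrite Rminus_eq_0, Rabs_R0. lra.
Qed.

(** * Linear equations and uniqueness *)

Lemma linear_ode_integrating_factor (g a b : R -> R) t : (forall s, continuous a s) ->
  is_derive g t (a t * g t + b t) ->
  is_derive (fun s => g s * exp (- RInt a 0 s)) t (b t * exp (- RInt a 0 t)).
Proof.
  intros Ha Hg.
  assert (He : is_derive (fun s => exp (- RInt a 0 s)) t (- a t * exp (- RInt a 0 t))).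
  { apply (is_derive_eq _ _ _ _ (is_derive_comp exp (fun s => - RInt a 0 s) t _ _ (is_derive_exp _)
      (is_derive_opp _ t _ (is_derive_RInt_upper a 0 t Ha)))).
    unfold_ops; ring. }
  apply (is_derive_eq _ _ _ _ (is_derive_mult _ _ t _ _ Hg He Rmult_comm)).
  unfold_ops; ring.
Qed.

Lemma linear_ode_solution (g a : R -> R) : (forall s, continuous a s) ->
  (forall t, 0 <= t <= 1 -> is_derive g t (a t * g t)) ->
  forall t, 0 <= t <= 1 -> g t = g 0 * exp (RInt a 0 t).
Proof.
  intros Ha Hg t Ht.
  assert (Hconst : forall s, 0 <= s <= 1 -> is_derive (fun s => g s * exp (- RInt a 0 s)) s 0).
  { intros s Hs. apply (is_derive_eq _ _ _ _ (linear_ode_integrating_factor g a (fun _ => 0) s Ha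
      ltac:(rewrite Rplus_0_r; apply Hg; lra))).
    apply Rmult_0_l. }
  assert (Hw := derive_zero_constant _ 0 t ltac:(lra) (fun s Hs => Hconst s ltac:(lra))).
  simpl in Hw. rewrite RInt_point in Hw. unfold zero in Hw; simpl in Hw.
  rewrite Ropp_0, exp_0, Rmult_1_r in Hw. rewrite <- Hw, Rmult_assoc, <- exp_plus, Rplus_opp_l, exp_0. ring.
Qed.

(* [g exp (- RInt a 0 t)] increases strictly, so a zero of [g] forces [g 0 <= 0 <= g 1]. *)
Lemma linear_ode_forced_periodic_nonvanishing (g a b : R -> R) : (forall s, continuous a s) ->
  (forall t, 0 <= t <= 1 -> is_derive g t (a t * g t + b t)) ->
  (forall t, 0 <= t <= 1 -> 0 < b t) -> g 0 = g 1 ->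
  forall t, 0 <= t <= 1 -> g t <> 0.
Proof.
  intros Ha Hg Hb Hp t0 Ht0 Hz.
  set (w := fun s => g s * exp (- RInt a 0 s)).
  assert (Hw : forall s, 0 <= s <= 1 -> is_derive w s (b s * exp (- RInt a 0 s))).
  { intros s Hs. apply linear_ode_integrating_factor; auto. }
  assert (Hpos : forall u v, 0 <= u <= v -> v <= 1 -> w u <= w v /\ (u < v -> w u < w v)).
  { intros u v Huv Hv. destruct (MVT_interval w _ u v ltac:(lra) ltac:(intros; apply Hw; lra)) as [c [Hc E]].
    assert (0 < b c * exp (- RInt a 0 c)) by (apply Rmult_lt_0_compat; [apply Hb; lra | apply exp_pos]).
    split; [| intros]; nra. }
  assert (w0 : w 0 = g 0).
  { unfold w. rewrite RInt_point. unfold zero; simpl. rewrite Ropp_0, exp_0. ring. }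
  assert (wt0 : w t0 = 0) by (unfold w; rewrite Hz; ring).
  assert (H1 : w 1 = g 1 * exp (- RInt a 0 1)) by reflexivity.
  assert (He := exp_pos (- RInt a 0 1)).
  destruct (Hpos 0 t0 ltac:(lra) ltac:(lra)) as [Hl _].
  destruct (Hpos t0 1 ltac:(lra) ltac:(lra)) as [Hr _].
  destruct (Hpos 0 1 ltac:(lra) ltac:(lra)) as [_ Hs].
  specialize (Hs ltac:(lra)). nra.
Qed.

Definition rhs_continuous (F : rhs) : Prop :=
  forall h t, continuous h t -> continuous (fun s => F s (h s)) t.

Definition locally_lipschitz (F : rhs) : Prop :=
  forall M, exists L, 0 < L /\ forall t u v, 0 <= t <= 1 -> Rabs u <= M -> Rabs v <= M ->
    Rabs (F t u - F t v) <= L * Rabs (u - v).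

Definition unique_solutions (F : rhs) : Prop :=
  forall x y t0, is_solution F x -> is_solution F y -> 0 <= t0 <= 1 -> x t0 = y t0 ->
    forall t, 0 <= t <= 1 -> x t = y t.

Definition difference_quotient (F : rhs) (Q : R -> R -> R -> R) : Prop :=
  forall t u v, F t u - F t v = Q t u v * (u - v).

Definition continuous_along (Q : R -> R -> R -> R) : Prop :=
  forall g h t, continuous g t -> continuous h t -> continuous (fun s => Q s (g s) (h s)) t.

Definition nontrivial (x : R -> R) : Prop := exists t, 0 <= t <= 1 /\ x t <> 0.

Lemma solution_continuous F x : is_solution F x -> forall t, 0 <= t <= 1 -> continuous x t.
Proof. intros Hx t Ht. exact (is_derive_continuous x t _ (Hx t Ht)). Qed.

Lemma constant_solution F u : (forall t, 0 <= t <= 1 -> F t u = 0) -> is_solution F (fun _ => u).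
Proof. intros H t Ht. rewrite H by exact Ht. apply (is_derive_const (K := R_AbsRing) (V := R_NormedModule)). Qed.

Lemma solution_integral F x : rhs_continuous F -> is_solution F x ->
  forall t, 0 <= t <= 1 -> x t = x 0 + RInt (fun s => F s (x s)) 0 t.
Proof.
  intros HF Hx t Ht.
  assert (H := is_RInt_derive (V := R_CompleteNormedModule) x (fun s => F s (x s)) 0 t).
  rewrite Rmin_left, Rmax_right in H by lra.
  rewrite (is_RInt_unique _ _ _ _ (H (fun s Hs => Hx s ltac:(lra))
    (fun s Hs => HF x s (solution_continuous F x Hx s ltac:(lra))))).
  unfold_ops; ring.
Qed.

Section DifferenceQuotient.
Variables (F : rhs) (Q : R -> R -> R -> R).
Hypotheses (HQ : difference_quotient F Q) (HQc : continuous_along Q).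

Definition mean_slope (x y : R -> R) (s : R) : R := Q s (x (clamp s)) (y (clamp s)).

Lemma mean_slope_continuous x y : (forall t, 0 <= t <= 1 -> continuous x t) ->
  (forall t, 0 <= t <= 1 -> continuous y t) -> forall s, continuous (mean_slope x y) s.
Proof. intros Hx Hy s. apply HQc; now apply continuous_clamp_comp. Qed.

Lemma solution_offset_linear x u : is_solution F x -> forall t, 0 <= t <= 1 ->
  is_derive (fun s => x s - u) t (mean_slope x (fun _ => u) t * (x t - u) + F t u).
Proof.
  intros Hx t Ht.
  apply (is_derive_eq _ _ _ _ (is_derive_minus _ _ t _ _ (Hx t Ht) (is_derive_const u t))).
  unfold mean_slope. rewrite clamp_id by exact Ht. rewrite <- HQ. unfold_ops; ring.
Qed.

Lemma periodic_solution_avoids x u k : periodic_orbit F x ->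
  (forall t, 0 <= t <= 1 -> 0 < k * F t u) -> forall t, 0 <= t <= 1 -> x t <> u.
Proof.
  intros [Hx Hper] Hk t Ht E.
  apply (linear_ode_forced_periodic_nonvanishing (fun s => k * (x s - u)) (mean_slope x (fun _ => u))
    (fun s => k * F s u)) with t; [| | exact Hk | now rewrite Hper | exact Ht | rewrite E; ring].
  - apply mean_slope_continuous; [now apply solution_continuous with F | intros; apply continuous_const].
  - intros s Hs. apply (is_derive_eq _ _ _ _ (is_derive_scal _ s k _ (solution_offset_linear x u Hx s Hs))).
    unfold_ops; ring.
Qed.

Lemma solutions_difference x y : is_solution F x -> is_solution F y ->
  forall t, 0 <= t <= 1 -> x t - y t = (x 0 - y 0) * exp (RInt (mean_slope x y) 0 t).
Proof.
  intros Hx Hy.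
  apply (linear_ode_solution (fun s => x s - y s));
    [apply mean_slope_continuous; now apply solution_continuous with F |].
  intros t Ht. apply (is_derive_eq _ _ _ _ (is_derive_minus _ _ t _ _ (Hx t Ht) (Hy t Ht))).
  unfold mean_slope. rewrite !clamp_id by exact Ht. rewrite <- HQ. unfold_ops; ring.
Qed.

Lemma unique_solutions_of_quotient : unique_solutions F.
Proof.
  intros x y t0 Hx Hy Ht0 E t Ht.
  assert (E0 := solutions_difference x y Hx Hy t0 Ht0).
  assert (Et := solutions_difference x y Hx Hy t Ht).
  assert (x 0 - y 0 = 0).
  { apply (Rmult_eq_reg_r (exp (RInt (mean_slope x y) 0 t0))); [lra |].
    apply Rgt_not_eq, exp_pos. }
  rewrite H in Et. lra.
Qed.

End DifferenceQuotient.

Lemma nontrivial_solution_nonvanishing F x : unique_solutions F -> (forall t, F t 0 = 0) ->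
  is_solution F x -> nontrivial x -> forall t, 0 <= t <= 1 -> x t <> 0.
Proof.
  intros HU H0 Hx [t0 [Ht0 Hne]] t Ht Hz. apply Hne.
  exact (HU x (fun _ => 0) t Hx (constant_solution F 0 (fun s _ => H0 s)) Ht Hz t0 Ht0).
Qed.

(** * Existence and continuous dependence on the initial value *)

Lemma RInt_exp_weight (L d c : R) : 0 < L ->
  RInt (fun s => L * (d * exp (2 * L * s))) 0 c = d * (exp (2 * L * c) - 1) / 2.
Proof.
  intros HL. apply is_RInt_unique.
  replace (d * (exp (2 * L * c) - 1) / 2) with (minus (d * exp (2 * L * c) / 2) (d * exp (2 * L * 0) / 2))
    by (unfold_ops; rewrite Rmult_0_r, exp_0; field).
  apply (is_RInt_derive (V := R_CompleteNormedModule) (fun s => d * exp (2 * L * s) / 2)).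
  - intros s _. auto_derive; [easy | field].
  - intros s _. apply (is_derive_continuous _ s (L * (d * (2 * L * exp (2 * L * s))))).
    auto_derive; [easy | ring].
Qed.

Section Picard.
Variables (F : rhs) (x0 : R -> R) (M L : R).
Hypotheses (HF : rhs_continuous F) (Hx0 : is_solution F x0) (HL : 0 < L)
  (HLip : forall t u v, 0 <= t <= 1 -> Rabs u <= M -> Rabs v <= M ->
     Rabs (F t u - F t v) <= L * Rabs (u - v))
  (HM : forall t, 0 <= t <= 1 -> Rabs (x0 t) + 1 <= M).

Let X t := x0 (clamp t).
Let K := exp (2 * L).

(* Picard iteration started at the reference solution [x0], whose first step moves by exactly
   [|z - x0 0|]. In the weighted norm [sup |phi s| exp (- 2 L s)] the Picard map is a
   1/2-contraction ([picard_contraction]), which controls every later step. *)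
Definition picard (z : R) (phi : R -> R) (t : R) : R :=
  z + RInt (fun s => F s (phi s)) 0 (clamp t).

Definition picard_iter (z : R) (n : nat) : R -> R := Nat.iter n (picard z) X.

Definition picard_limit (z t : R) : R := real (Lim_seq (fun n => picard_iter z n t)).

Lemma picard_continuous z phi : (forall s, continuous phi s) -> forall t, continuous (picard z phi) t.
Proof.
  intros Hphi t. apply continuous_Rplus; [apply continuous_const |].
  apply (continuous_comp clamp (fun u => RInt (fun s => F s (phi s)) 0 u)); [apply continuous_clamp |].
  apply (is_derive_continuous _ _ _ (is_derive_RInt_upper _ 0 _ (fun s => HF phi s (Hphi s)))).
Qed.

Lemma X_continuous t : continuous X t.
Proof. apply continuous_clamp_comp. now apply solution_continuous with F. Qed.

Lemma picard_X z t : picard z X t = X t + (z - x0 0).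
Proof.
  unfold picard, X at 2. rewrite (solution_integral F x0 HF Hx0 (clamp t) (clamp_in t)).
  rewrite (RInt_ext _ (fun s => F s (x0 s))); [ring |].
  intros s Hs. rewrite Rmin_left, Rmax_right in Hs by apply clamp_in.
  assert (Hc := clamp_in t). unfold X. rewrite clamp_id by lra. reflexivity.
Qed.

Lemma exp_weight_le t : 1 <= exp (2 * L * clamp t) <= K.
Proof.
  assert (Hc := clamp_in t). unfold K. split.
  - rewrite <- exp_0. apply exp_monotone. nra.
  - apply exp_monotone. nra.
Qed.

Lemma picard_contraction z phi psi d t :
  (forall s, continuous phi s) -> (forall s, continuous psi s) ->
  (forall s, 0 <= s <= 1 -> Rabs (phi s) <= M /\ Rabs (psi s) <= M) ->
  (forall s, 0 <= s <= 1 -> Rabs (phi s - psi s) <= d * exp (2 * L * s)) ->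
  Rabs (picard z phi t - picard z psi t) <= d / 2 * exp (2 * L * clamp t).
Proof.
  intros Hphi Hpsi HM' Hd.
  assert (Hd0 : 0 <= d).
  { specialize (Hd 0 ltac:(lra)). rewrite Rmult_0_r, exp_0 in Hd. assert (H := Rabs_pos (phi 0 - psi 0)). lra. }
  assert (Hc := clamp_in t).
  unfold picard.
  replace (z + RInt (fun s => F s (phi s)) 0 (clamp t) - (z + RInt (fun s => F s (psi s)) 0 (clamp t)))
    with (RInt (fun s => F s (phi s)) 0 (clamp t) - RInt (fun s => F s (psi s)) 0 (clamp t)) by ring.
  eapply Rle_trans; [apply (RInt_abs_diff_le _ _ (fun s => L * (d * exp (2 * L * s)))) |].
  - apply Hc.
  - intros s; apply HF, Hphi.
  - intros s; apply HF, Hpsi.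
  - intros s. apply (is_derive_continuous _ s (L * (d * (2 * L * exp (2 * L * s))))). auto_derive; [easy | ring].
  - intros s Hs. destruct (HM' s ltac:(lra)) as [H1 H2].
    eapply Rle_trans; [apply HLip; [lra | exact H1 | exact H2] |].
    apply Rmult_le_compat_l; [lra | apply Hd; lra].
  - rewrite RInt_exp_weight by exact HL. assert (H := exp_pos (2 * L * clamp t)). nra.
Qed.

Lemma picard_iter_continuous z n t : continuous (picard_iter z n) t.
Proof.
  revert t. induction n as [| n IH]; intros t; [apply X_continuous |].
  now apply picard_continuous.
Qed.

Section Estimates.
Variable z : R.
Let e := Rabs (z - x0 0).
Hypothesis Hz : 2 * K * e <= 1.

Let e_nonneg : 0 <= e := Rabs_pos _.

Lemma tube_weaken n : 2 * K * e * (1 - (/2) ^ n) <= 2 * K * e.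
Proof.
  assert (Hq : 0 < (/2) ^ n) by (apply pow_lt; lra).
  assert (0 <= K * e * (/2) ^ n) by (apply Rmult_le_pos; [apply Rmult_le_pos; [left; apply exp_pos |] |]; lra).
  lra.
Qed.

Lemma tube_bounded phi s : 0 <= s <= 1 -> Rabs (phi s - X s) <= 2 * K * e -> Rabs (phi s) <= M.
Proof.
  intros Hs H. specialize (HM s Hs). unfold X in H. rewrite clamp_id in H by exact Hs.
  assert (H1 := Rabs_triang_inv (phi s) (x0 s)). lra.
Qed.

Lemma picard_tube_succ n s : 0 <= s <= 1 ->
  Rabs (picard_iter z n s - X s) <= 2 * K * e * (1 - (/2) ^ n) ->
  Rabs (picard_iter z (S n) s - picard_iter z n s) <= e * (/2) ^ n * exp (2 * L * clamp s) ->
  Rabs (picard_iter z (S n) s - X s) <= 2 * K * e * (1 - (/2) ^ S n).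
Proof.
  intros Hs Htube Hstep. destruct (exp_weight_le s).
  assert (e * (/2) ^ n * exp (2 * L * clamp s) <= e * (/2) ^ n * K)
    by (apply Rmult_le_compat_l; [apply Rmult_le_pos; [| apply pow_le] |]; lra).
  replace (picard_iter z (S n) s - X s)
    with ((picard_iter z (S n) s - picard_iter z n s) + (picard_iter z n s - X s)) by ring.
  eapply Rle_trans; [apply Rabs_triang |]. change ((/2) ^ S n) with (/2 * (/2) ^ n). lra.
Qed.

Lemma picard_iter_estimates n :
  (forall s, 0 <= s <= 1 -> Rabs (picard_iter z n s - X s) <= 2 * K * e * (1 - (/2) ^ n)) /\
  (forall t, Rabs (picard_iter z (S n) t - picard_iter z n t) <= e * (/2) ^ n * exp (2 * L * clamp t)).
Proof.
  induction n as [| n [IHtube IHstep]]; split.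
  - intros s _. simpl. rewrite Rminus_eq_0, Rabs_R0. lra.
  - intros t. simpl. rewrite picard_X.
    replace (X t + (z - x0 0) - X t) with (z - x0 0) by ring.
    destruct (exp_weight_le t). fold e. nra.
  - intros s Hs. apply picard_tube_succ; auto.
  - intros t. replace (e * (/2) ^ S n) with (e * (/2) ^ n / 2) by (simpl; field).
    apply (picard_contraction z (picard_iter z (S n)) (picard_iter z n));
      [apply picard_iter_continuous | apply picard_iter_continuous | |].
    + intros s Hs. split; apply tube_bounded; try exact Hs; eapply Rle_trans; try apply tube_weaken.
      * apply picard_tube_succ; auto.
      * now apply IHtube.
    + intros s Hs. specialize (IHstep s). now rewrite clamp_id in IHstep.
Qed.

Lemma picard_limit_close n t : Rabs (picard_limit z t - picard_iter z n t) <= 2 * (K * e) * (/2) ^ n.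
Proof.
  apply (lim_geometric (fun n => picard_iter z n t)). intros m.
  destruct (picard_iter_estimates m) as [_ Hstep]. specialize (Hstep t).
  destruct (exp_weight_le t).
  assert (0 <= e * (/2) ^ m) by (apply Rmult_le_pos; [apply Rabs_pos | apply pow_le; lra]).
  assert (e * (/2) ^ m * exp (2 * L * clamp t) <= e * (/2) ^ m * K) by (apply Rmult_le_compat_l; lra).
  lra.
Qed.

Lemma picard_limit_continuous t : continuous (picard_limit z) t.
Proof.
  apply (uniform_limit_continuous (picard_iter z) _ (fun n => 2 * (K * e) * (/2) ^ n));
    [apply picard_iter_continuous | apply picard_limit_close | apply is_lim_seq_halving].
Qed.

Lemma picard_limit_tube s : 0 <= s <= 1 -> Rabs (picard_limit z s - x0 s) <= 2 * K * e.
Proof.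
  intros Hs. assert (H := picard_limit_close 0 s). simpl in H. unfold X in H.
  rewrite clamp_id in H by exact Hs. lra.
Qed.

Lemma picard_limit_fixed t : picard_limit z t = picard z (picard_limit z) t.
Proof.
  apply Rminus_diag_uniq, (geometric_zero _ (K * e + K * (K * e))). intros n.
  assert (Hq : 0 < (/2) ^ n) by (apply pow_lt; lra).
  assert (HKe : 0 <= K * e * (/2) ^ n)
    by (apply Rmult_le_pos; [apply Rmult_le_pos; [left; apply exp_pos |] |]; lra).
  assert (Hcontr : Rabs (picard z (picard_iter z n) t - picard z (picard_limit z) t)
      <= 2 * (K * e) * (/2) ^ n / 2 * exp (2 * L * clamp t)).
  { apply picard_contraction; [apply picard_iter_continuous | apply picard_limit_continuous | |].
    - intros s Hs. split; apply tube_bounded; try exact Hs.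
      + eapply Rle_trans; [now apply (picard_iter_estimates n) | apply tube_weaken].
      + unfold X. rewrite clamp_id by exact Hs. now apply picard_limit_tube.
    - intros s Hs. rewrite Rabs_minus_sym. destruct (exp_weight_le s) as [H1 _].
      rewrite clamp_id in H1 by exact Hs.
      eapply Rle_trans; [apply picard_limit_close |]. nra. }
  assert (Hnext := picard_limit_close (S n) t). simpl in Hnext.
  destruct (exp_weight_le t) as [_ H2].
  replace (picard_limit z t - picard z (picard_limit z) t)
    with ((picard_limit z t - picard z (picard_iter z n) t)
          + (picard z (picard_iter z n) t - picard z (picard_limit z) t)) by ring.
  eapply Rle_trans; [apply Rabs_triang |]. nra.
Qed.

Definition picard_solution (t : R) : R := z + RInt (fun s => F s (picard_limit z s)) 0 t.

Lemma picard_solution_spec :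
  is_solution F picard_solution /\ picard_solution 0 = z /\
  forall t, 0 <= t <= 1 -> Rabs (picard_solution t - x0 t) <= 2 * K * e.
Proof.
  assert (Heq : forall t, 0 <= t <= 1 -> picard_solution t = picard_limit z t).
  { intros t Ht. rewrite picard_limit_fixed. unfold picard. now rewrite clamp_id. }
  split; [| split].
  - intros t Ht. rewrite Heq by exact Ht.
    apply (is_derive_eq _ _ _ _ (is_derive_plus (fun _ => z) _ t _ _ (is_derive_const z t)
      (is_derive_RInt_upper _ 0 t (fun s => HF _ s (picard_limit_continuous s))))).
    unfold_ops; ring.
  - unfold picard_solution. rewrite RInt_point. unfold_ops; ring.
  - intros t Ht. rewrite Heq by exact Ht. now apply picard_limit_tube.
Qed.

End Estimates.
End Picard.

Theorem local_flow (F : rhs) (x0 : R -> R) :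
  rhs_continuous F -> locally_lipschitz F -> is_solution F x0 ->
  exists d C (sol : R -> R -> R), 0 < d /\ 0 <= C /\ forall z, Rabs (z - x0 0) < d ->
    is_solution F (sol z) /\ sol z 0 = z /\
    forall t, 0 <= t <= 1 -> Rabs (sol z t - x0 t) <= C * Rabs (z - x0 0).
Proof.
  intros HF HFl Hx0.
  destruct (bounded_on_01 x0 (solution_continuous F x0 Hx0)) as [M0 HM0].
  destruct (HFl (M0 + 1)) as [L [HL HLip]].
  assert (HK := exp_pos (2 * L)).
  exists (/ (2 * exp (2 * L))), (2 * exp (2 * L)), (picard_solution F x0).
  split; [apply Rinv_0_lt_compat; lra |]. split; [lra |]. intros z Hz.
  assert (Hz' : 2 * exp (2 * L) * Rabs (z - x0 0) <= 1).
  { apply Rlt_le. apply (Rmult_lt_compat_l (2 * exp (2 * L))) in Hz; [| lra].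
    now rewrite Rinv_r in Hz by lra. }
  exact (picard_solution_spec F x0 (M0 + 1) L HF Hx0 HL HLip
    (fun t Ht => Rplus_le_compat_r 1 _ _ (HM0 t Ht)) z Hz').
Qed.

Corollary local_flow_centered (F : rhs) (x0 : R -> R) :
  rhs_continuous F -> locally_lipschitz F -> is_solution F x0 ->
  exists d C (sol : R -> R -> R), 0 < d /\ 0 <= C /\ C * d <= 1 /\ forall h, Rabs h < d ->
    is_solution F (sol h) /\ sol h 0 = x0 0 + h /\
    forall t, 0 <= t <= 1 -> Rabs (sol h t - x0 t) <= C * Rabs h.
Proof.
  intros HF HFl Hx0. destruct (local_flow F x0 HF HFl Hx0) as [d [C [sol [Hd [HC Hsol]]]]].
  exists (Rmin d (/ (C + 1))), C, (fun h => sol (x0 0 + h)).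
  split; [apply Rmin_pos; [exact Hd | apply Rinv_0_lt_compat; lra] |]. split; [exact HC |]. split.
  - apply (Rle_trans _ (C * / (C + 1))); [apply Rmult_le_compat_l; [exact HC | apply Rmin_r] |].
    apply (Rmult_le_reg_r (C + 1)); [| rewrite Rmult_assoc, Rinv_l]; lra.
  - intros h Hh. assert (E : x0 0 + h - x0 0 = h) by ring.
    destruct (Hsol (x0 0 + h)) as [H1 [H2 H3]]; [rewrite E; exact (Rlt_le_trans _ _ _ Hh (Rmin_l _ _)) |].
    rewrite E in H3. auto.
Qed.

(** * The derivative of the Poincare map *)

Lemma is_derive_of_slope (P q : R -> R) z0 d : 0 < d ->
  (forall h, Rabs h < d -> P (z0 + h) - P z0 = h * q h) -> continuous q 0 ->
  is_derive P z0 (q 0).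
Proof.
  intros Hd Hslope Hq. apply is_derive_Reals. intros eps Heps.
  apply continuity_pt_filterlim in Hq. destruct (Hq eps Heps) as [d1 [Hd1 Hq1]].
  exists (mkposreal _ (Rmin_pos _ _ Hd Hd1)). simpl. intros h Hh0 Hh.
  assert (Hhd := Rlt_le_trans _ _ _ Hh (Rmin_l d d1)).
  assert (Hhd1 := Rlt_le_trans _ _ _ Hh (Rmin_r d d1)).
  rewrite Hslope by exact Hhd. replace (h * q h / h) with (q h) by (field; exact Hh0).
  apply (Hq1 h). split; [split; [exact I | auto] |]. simpl. unfold R_dist. now rewrite Rminus_0_r.
Qed.

Lemma continuous_of_local_lipschitz (f : R -> R) x d C : 0 < d ->
  (forall y, Rabs (y - x) < d -> Rabs (f y - f x) <= C * Rabs (y - x)) -> continuous f x.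
Proof.
  intros Hd Hf. apply continuity_pt_filterlim. intros eps Heps.
  exists (Rmin d (eps / (Rabs C + 1))). split.
  { apply Rmin_pos; [exact Hd |]. apply Rdiv_lt_0_compat; [exact Heps |]. assert (H := Rabs_pos C). lra. }
  intros y [_ Hy]. simpl in *. unfold R_dist in *.
  assert (Hyd := Rlt_le_trans _ _ _ Hy (Rmin_l _ _)).
  assert (Hye := Rlt_le_trans _ _ _ Hy (Rmin_r _ _)).
  eapply Rle_lt_trans; [apply Hf, Hyd |].
  assert (HC := Rabs_pos C). assert (Hy0 := Rabs_pos (y - x)).
  apply (Rmult_lt_compat_l (Rabs C + 1)) in Hye; [| lra].
  replace ((Rabs C + 1) * (eps / (Rabs C + 1))) with eps in Hye by (field; lra).
  assert (C <= Rabs C) by apply RRle_abs.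
  assert (C * Rabs (y - x) <= (Rabs C + 1) * Rabs (y - x)) by (apply Rmult_le_compat_r; lra).
  lra.
Qed.

Definition quotient_lipschitz (Q : R -> R -> R -> R) : Prop :=
  forall M, exists L, 0 < L /\ forall t u v, 0 <= t <= 1 -> Rabs u <= M -> Rabs v <= M ->
    Rabs (Q t u v - Q t v v) <= L * Rabs (u - v).

Section Linearization.
Variables (F : rhs) (Q : R -> R -> R -> R).
Hypotheses (HF : rhs_continuous F) (HFl : locally_lipschitz F)
  (HQ : difference_quotient F Q) (HQc : continuous_along Q) (HQl : quotient_lipschitz Q).

Lemma RInt_mean_slope_close M Lq x y d :
  (forall t u v, 0 <= t <= 1 -> Rabs u <= M -> Rabs v <= M -> Rabs (Q t u v - Q t v v) <= Lq * Rabs (u - v)) ->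
  is_solution F x -> is_solution F y ->
  (forall t, 0 <= t <= 1 -> Rabs (x t) <= M /\ Rabs (y t) <= M) ->
  (forall t, 0 <= t <= 1 -> Rabs (x t - y t) <= d) -> 0 <= Lq ->
  Rabs (RInt (mean_slope Q x y) 0 1 - RInt (mean_slope Q y y) 0 1) <= Lq * d.
Proof.
  intros HQlip Hx Hy HM Hd HLq.
  eapply Rle_trans; [apply (RInt_abs_diff_le _ _ (fun _ => Lq * d)); [lra | | | apply continuous_const |] |].
  - apply (mean_slope_continuous Q HQc); now apply solution_continuous with F.
  - apply (mean_slope_continuous Q HQc); now apply solution_continuous with F.
  - intros s Hs. unfold mean_slope. rewrite !clamp_id by exact Hs. destruct (HM s Hs).
    eapply Rle_trans; [apply HQlip; auto |]. apply Rmult_le_compat_l; auto.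
  - rewrite RInt_const. unfold_ops. lra.
Qed.

Theorem poincare_map_derivative x0 : is_solution F x0 ->
  exists P d, 0 < d /\ (forall z, Rabs (z - x0 0) < d -> poincare_rel F z (P z)) /\
    is_derive P (x0 0) (exp (RInt (mean_slope Q x0 x0) 0 1)).
Proof.
  intros Hx0.
  destruct (local_flow_centered F x0 HF HFl Hx0) as [d [C [sol [Hd [HC [HCd Hsol]]]]]].
  destruct (bounded_on_01 x0 (solution_continuous F x0 Hx0)) as [M0 HM0].
  destruct (HQl (M0 + 1)) as [Lq [HLq HQlip]].
  assert (Hsol0 : forall t, 0 <= t <= 1 -> sol 0 t = x0 t).
  { intros t Ht. destruct (Hsol 0 ltac:(rewrite Rabs_R0; lra)) as [_ [_ Hb]].
    specialize (Hb t Ht). rewrite Rabs_R0, Rmult_0_r in Hb.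
    apply Rminus_diag_uniq, Rabs_eq_0. assert (H := Rabs_pos (sol 0 t - x0 t)). lra. }
  set (I h := RInt (mean_slope Q (sol h) x0) 0 1).
  assert (HI0 : I 0 = RInt (mean_slope Q x0 x0) 0 1).
  { apply RInt_ext. intros s _. unfold mean_slope. now rewrite Hsol0 by apply clamp_in. }
  exists (fun z => sol (z - x0 0) 1), d. split; [exact Hd |]. split.
  { intros z Hz. exists (sol (z - x0 0)). destruct (Hsol _ Hz) as [H1 [H2 _]].
    split; [exact H1 |]. split; [rewrite H2; ring | reflexivity]. }
  rewrite <- HI0. apply (is_derive_of_slope _ (fun h => exp (I h)) (x0 0) d Hd).
  - intros h Hh. destruct (Hsol h Hh) as [Hs [Hs0 _]]. cbv beta.
    rewrite Rminus_eq_0, (Hsol0 1), Rplus_comm, Rplus_minus_r by lra.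
    rewrite (solutions_difference F Q HQ HQc _ x0 Hs Hx0 1) by lra. rewrite Hs0. unfold I. ring.
  - apply (continuous_comp I exp); [| apply (is_derive_continuous exp _ _ (is_derive_exp _))].
    apply (continuous_of_local_lipschitz I 0 d (Lq * C) Hd). intros h Hh.
    rewrite Rminus_0_r in *. destruct (Hsol h Hh) as [Hs [_ Hb]].
    assert (HCh : C * Rabs h <= 1) by (apply (Rle_trans _ (C * d)); [apply Rmult_le_compat_l|]; lra).
    rewrite HI0, Rmult_assoc. apply (RInt_mean_slope_close (M0 + 1) Lq); auto; [| lra].
    intros t Ht. specialize (Hb t Ht). specialize (HM0 t Ht).
    assert (H := Rabs_triang_inv (sol h t) (x0 t)). lra.
Qed.

Corollary hyperbolic_of_mean_slope x : is_solution F x ->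
  RInt (mean_slope Q x x) 0 1 <> 0 -> hyperbolic F (x 0).
Proof.
  intros Hx HI. destruct (poincare_map_derivative x Hx) as [P [d [Hd [HP HPd]]]].
  exists P, d. split; [exact Hd |]. split; [exact HP |].
  exists (exp (RInt (mean_slope Q x x) 0 1)). split; [exact HPd |].
  intros E. apply HI, exp_inv. now rewrite E, exp_0.
Qed.

Lemma has_center_of_returns d0 : 0 < d0 -> (forall t, F t 0 = 0) ->
  (forall z x, z <> 0 -> Rabs z < d0 -> is_solution F x -> x 0 = z -> x 1 = z) -> has_center F.
Proof.
  intros Hd0 H0 Hret.
  assert (Hzero := constant_solution F 0 (fun t _ => H0 t)).
  destruct (local_flow F _ HF HFl Hzero) as [d [C [sol [Hd [_ Hsol]]]]].
  exists (Rmin d d0). split; [now apply Rmin_pos |]. intros z Hz.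
  assert (Hzd := Rlt_le_trans _ _ _ Hz (Rmin_l _ _)).
  assert (Hzd0 := Rlt_le_trans _ _ _ Hz (Rmin_r _ _)).
  split.
  - destruct (Hsol z) as [Hs [Hs0 _]]; [now rewrite Rminus_0_r |]. now exists (sol z).
  - intros x Hx Hx0. destruct (Req_dec z 0) as [-> | Hz0]; [| now apply (Hret z)].
    symmetry. apply (unique_solutions_of_quotient F Q HQ HQc _ x 0 Hzero Hx); [lra | easy | lra].
Qed.

End Linearization.

(** * Fields of the form alpha(t) f(x) + c g(x) *)

Lemma RInt_nonzero_of_rolle (a phi kappa : R -> R) : (forall s, continuous a s) ->
  (forall t, 0 <= t <= 1 -> is_derive phi t (a t - kappa t)) -> phi 0 = phi 1 ->
  (forall t, 0 <= t <= 1 -> kappa t <> 0) -> RInt a 0 1 <> 0.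
Proof.
  intros Ha Hphi Hper Hk HI.
  destruct (rolle01 (fun t => RInt a 0 t - phi t) kappa) as [c [Hc Hc0]].
  - intros t Ht.
    apply (is_derive_eq _ _ _ _ (is_derive_minus _ _ t _ _ (is_derive_RInt_upper a 0 t Ha) (Hphi t Ht))).
    unfold_ops; ring.
  - rewrite HI, RInt_point, Hper. unfold_ops; ring.
  - exact (Hk c Hc Hc0).
Qed.

Lemma is_derive_log_abs (f : R -> R) u df : is_derive f u df -> f u <> 0 ->
  is_derive (fun u => / 2 * ln (f u ^ 2)) u (df / f u).
Proof.
  intros Hf Hu.
  assert (Hpos : 0 < f u ^ 2) by (rewrite <- Rsqr_pow2; now apply Rsqr_pos_lt).
  apply (is_derive_eq _ _ _ _ (is_derive_scal _ u (/ 2) _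
    (is_derive_comp ln (fun u => f u ^ 2) u _ _ (is_derive_ln _ Hpos) (is_derive_pow f 2 u df Hf)))).
  unfold_ops. field. exact Hu.
Qed.

Section SplitField.
Variables (F : rhs) (alpha f g H P : R -> R) (c : R).
Hypotheses (HF : forall t u, F t u = alpha t * f u + c * g u)
  (HH : forall u, f u <> 0 -> is_derive H u (/ f u))
  (HP : forall t, is_derive P t (alpha t)).

Lemma first_integral_derive x t : is_solution F x -> 0 <= t <= 1 -> f (x t) <> 0 ->
  is_derive (fun s => H (x s) - P s) t (c * (g (x t) / f (x t))).
Proof.
  intros Hx Ht Hf.
  apply (is_derive_eq _ _ _ _ (is_derive_minus _ _ t _ _
    (is_derive_comp H x t _ _ (HH _ Hf) (Hx t Ht)) (HP t))).
  unfold_ops. rewrite HF. field. exact Hf.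
Qed.

Lemma separable_first_integral x : c = 0 -> is_solution F x ->
  (forall t, 0 <= t <= 1 -> f (x t) <> 0) -> H (x 1) - P 1 = H (x 0) - P 0.
Proof.
  intros Hc Hx Hf. apply (derive_zero_constant (fun s => H (x s) - P s)); [lra |].
  intros t Ht. apply (is_derive_eq _ _ _ _ (first_integral_derive x t Hx Ht (Hf t Ht))).
  rewrite Hc. apply Rmult_0_l.
Qed.

Lemma separable_return x : c = 0 -> P 1 = P 0 -> is_solution F x ->
  (forall t, 0 <= t <= 1 -> f (x t) <> 0) -> x 1 = x 0.
Proof.
  intros Hc HP01 Hx Hf.
  assert (HI := separable_first_integral x Hc Hx Hf).
  assert (Hfw : forall w, Rmin (x 0) (x 1) <= w <= Rmax (x 0) (x 1) -> f w <> 0).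
  { intros w Hw. destruct (intermediate_value_01 x w (solution_continuous F x Hx) Hw) as [tau [Htau <-]].
    exact (Hf tau Htau). }
  destruct (MVT_gen H (x 0) (x 1) (fun w => / f w)) as [w [Hw E]].
  - intros w Hw. apply HH, Hfw. lra.
  - intros w Hw. apply (is_derive_continuity_pt H w (/ f w)), HH, Hfw, Hw.
  - assert (Hinv := Rinv_neq_0_compat _ (Hfw w Hw)).
    apply Rminus_diag_uniq. apply (Rmult_eq_reg_l (/ f w)); [lra | exact Hinv].
Qed.

Lemma separable_constant_solution u : c = 0 -> f u = 0 -> is_solution F (fun _ => u).
Proof. intros Hc Hu. apply constant_solution. intros t _. rewrite HF, Hc, Hu. ring. Qed.

Lemma periodic_orbits_meet x y : c <> 0 ->
  (forall u v, f u <> 0 -> f v <> 0 -> g u / f u = g v / f v -> u = v) ->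
  periodic_orbit F x -> periodic_orbit F y ->
  (forall t, 0 <= t <= 1 -> f (x t) <> 0) -> (forall t, 0 <= t <= 1 -> f (y t) <> 0) ->
  exists tau, 0 <= tau <= 1 /\ x tau = y tau.
Proof.
  intros Hc Hr [Hx Hxp] [Hy Hyp] Hfx Hfy.
  destruct (rolle01 (fun s => (H (x s) - P s) - (H (y s) - P s))
    (fun s => c * (g (x s) / f (x s)) - c * (g (y s) / f (y s)))) as [tau [Htau E]].
  - intros t Ht. apply (is_derive_minus _ _ t _ _ (first_integral_derive x t Hx Ht (Hfx t Ht))
      (first_integral_derive y t Hy Ht (Hfy t Ht))).
  - rewrite Hxp, Hyp. ring.
  - exists tau. split; [exact Htau |]. apply Hr; [now apply Hfx | now apply Hfy |].
    apply (Rmult_eq_reg_l c); [lra | exact Hc].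
Qed.

Lemma mean_linearization_nonzero (df dg : R -> R) (ell : R -> R -> R) x : c <> 0 ->
  (forall u, is_derive f u (df u)) -> (forall t u, ell t u = alpha t * df u + c * dg u) ->
  (forall s, continuous (fun s => ell s (x (clamp s))) s) ->
  periodic_orbit F x -> (forall t, 0 <= t <= 1 -> f (x t) <> 0) ->
  (forall t, 0 <= t <= 1 -> dg (x t) * f (x t) <> df (x t) * g (x t)) ->
  RInt (fun s => ell s (x (clamp s))) 0 1 <> 0.
Proof.
  intros Hc Hdf Hell Hcont [Hx Hper] Hfx HW.
  apply (RInt_nonzero_of_rolle _ (fun s => / 2 * ln (f (x s) ^ 2))
    (fun s => c * ((dg (x s) * f (x s) - df (x s) * g (x s)) / f (x s)))); [exact Hcont | | now rewrite Hper |].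
  - intros t Ht. rewrite clamp_id by exact Ht.
    apply (is_derive_eq _ _ _ _ (is_derive_comp (fun u => / 2 * ln (f u ^ 2)) x t _ _
      (is_derive_log_abs f _ _ (Hdf (x t)) (Hfx t Ht)) (Hx t Ht))).
    rewrite Hell, HF. unfold_ops. field. exact (Hfx t Ht).
  - intros t Ht. specialize (Hfx t Ht). specialize (HW t Ht).
    apply Rmult_integral_contrapositive. split; [exact Hc |].
    unfold Rdiv. apply Rmult_integral_contrapositive. split; [lra | now apply Rinv_neq_0_compat].
Qed.

Lemma mean_linearization_constant (df dg : R -> R) (ell : R -> R -> R) u :
  (forall t, continuous alpha t) -> (forall t u, ell t u = alpha t * df u + c * dg u) ->
  RInt (fun s => ell s u) 0 1 = df u * (P 1 - P 0) + c * dg u.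
Proof.
  intros Halpha Hell. apply is_RInt_unique.
  replace (df u * (P 1 - P 0) + c * dg u)
    with (minus (df u * P 1 + c * dg u * 1) (df u * P 0 + c * dg u * 0)) by (unfold_ops; ring).
  apply (is_RInt_derive (V := R_CompleteNormedModule) (fun s => df u * P s + c * dg u * s)).
  - intros s _.
    apply (is_derive_eq _ _ _ _ (is_derive_plus _ _ s _ _ (is_derive_scal _ s (df u) _ (HP s))
      (is_derive_scal _ s (c * dg u) _ (is_derive_id s)))).
    rewrite Hell. unfold_ops. ring.
  - intros s _. apply (continuous_ext (fun s => alpha s * df u + c * dg u)); [intros; now rewrite Hell |].
    apply continuous_Rplus; [apply continuous_Rmult; [apply Halpha |] |]; apply continuous_const.
Qed.

End SplitField.

(** * Abel equations *)

Definition abel (A B : R -> R) : rhs := fun t u => A t * u ^ 3 + B t * u ^ 2.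

Definition abel_quotient (A B : R -> R) (t u v : R) : R :=
  A t * (u ^ 2 + u * v + v ^ 2) + B t * (u + v).

Definition at_most_one_hyperbolic_cycle (F : rhs) : Prop :=
  (forall x y, periodic_orbit F x -> periodic_orbit F y -> nontrivial x -> nontrivial y ->
     forall t, 0 <= t <= 1 -> x t = y t) /\
  (forall x, periodic_orbit F x -> nontrivial x -> hyperbolic F (x 0)).

Lemma at_most_one_hyperbolic_cycle_of_none F :
  (forall x, periodic_orbit F x -> nontrivial x -> False) -> at_most_one_hyperbolic_cycle F.
Proof. intros H. split; intros x; [intros y Hx _ Hnx | intros Hx Hnx]; exfalso; exact (H x Hx Hnx). Qed.

Section Abel.
Variables A B : R -> R.
Hypotheses (HA : forall t, continuous A t) (HB : forall t, continuous B t).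

Lemma abel_difference_quotient : difference_quotient (abel A B) (abel_quotient A B).
Proof. intros t u v. unfold abel, abel_quotient. ring. Qed.

Lemma abel_rhs_continuous : rhs_continuous (abel A B).
Proof.
  intros h t Hh. unfold abel.
  apply continuous_Rplus; apply continuous_Rmult; auto; now apply continuous_Rpow.
Qed.

Lemma abel_quotient_continuous : continuous_along (abel_quotient A B).
Proof.
  intros g h t Hg Hh. unfold abel_quotient.
  apply continuous_Rplus; apply continuous_Rmult; [apply HA | | apply HB | now apply continuous_Rplus].
  apply continuous_Rplus; [apply continuous_Rplus |]; auto using continuous_Rpow, continuous_Rmult.
Qed.

Lemma abel_coefficients_bounded : exists S, forall t, 0 <= t <= 1 -> Rabs (A t) <= S /\ Rabs (B t) <= S.
Proof.
  destruct (bounded_on_01 A (fun t _ => HA t)) as [SA HSA].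
  destruct (bounded_on_01 B (fun t _ => HB t)) as [SB HSB].
  exists (Rmax SA SB). intros t Ht. split.
  - eapply Rle_trans; [apply HSA, Ht | apply Rmax_l].
  - eapply Rle_trans; [apply HSB, Ht | apply Rmax_r].
Qed.

Lemma abel_locally_lipschitz : locally_lipschitz (abel A B).
Proof.
  intros M. destruct abel_coefficients_bounded as [S HS].
  exists (Rabs S * (3 * M ^ 2) + Rabs S * (2 * Rabs M) + 1). split.
  { assert (H1 := Rabs_pos S). assert (H2 := Rabs_pos M). assert (H3 := pow2_ge_0 M). nra. }
  intros t u v Ht Hu Hv. rewrite abel_difference_quotient, Rabs_mult.
  apply Rmult_le_compat_r; [apply Rabs_pos |]. unfold abel_quotient.
  destruct (HS t Ht) as [HAt HBt].
  apply Rabs_le_between in Hu. apply Rabs_le_between in Hv.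
  assert (Hp : Rabs (u ^ 2 + u * v + v ^ 2) <= 3 * M ^ 2) by (apply Rabs_le_between; nra).
  assert (Hs : Rabs (u + v) <= 2 * Rabs M).
  { assert (M <= Rabs M) by apply RRle_abs. apply Rabs_le_between; lra. }
  eapply Rle_trans; [apply Rabs_triang |].
  assert (H1 := Rabs_mult_le _ _ _ _ (Rle_trans _ _ _ HAt (RRle_abs S)) Hp).
  assert (H2 := Rabs_mult_le _ _ _ _ (Rle_trans _ _ _ HBt (RRle_abs S)) Hs).
  lra.
Qed.

Lemma abel_quotient_lipschitz : quotient_lipschitz (abel_quotient A B).
Proof.
  intros M. destruct abel_coefficients_bounded as [S HS].
  exists (Rabs S * (3 * Rabs M) + Rabs S + 1). split.
  { assert (H1 := Rabs_pos S). assert (H2 := Rabs_pos M). nra. }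
  intros t u v Ht Hu Hv.
  replace (abel_quotient A B t u v - abel_quotient A B t v v)
    with ((A t * (u + 2 * v) + B t) * (u - v)) by (unfold abel_quotient; ring).
  rewrite Rabs_mult. apply Rmult_le_compat_r; [apply Rabs_pos |].
  destruct (HS t Ht) as [HAt HBt].
  assert (Hs : Rabs (u + 2 * v) <= 3 * Rabs M).
  { apply Rabs_le_between in Hu. apply Rabs_le_between in Hv.
    assert (M <= Rabs M) by apply RRle_abs. apply Rabs_le_between; lra. }
  eapply Rle_trans; [apply Rabs_triang |].
  assert (H1 := Rabs_mult_le _ _ _ _ (Rle_trans _ _ _ HAt (RRle_abs S)) Hs).
  assert (H2 := Rle_trans _ _ _ HBt (RRle_abs S)).
  lra.
Qed.

Lemma abel_unique : unique_solutions (abel A B).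
Proof.
  exact (unique_solutions_of_quotient _ _ abel_difference_quotient abel_quotient_continuous).
Qed.

Lemma abel_nonvanishing x : is_solution (abel A B) x -> nontrivial x -> forall t, 0 <= t <= 1 -> x t <> 0.
Proof.
  apply nontrivial_solution_nonvanishing; [exact abel_unique |]. intros t. unfold abel. ring.
Qed.

Lemma abel_hyperbolic x : is_solution (abel A B) x ->
  RInt (mean_slope (abel_quotient A B) x x) 0 1 <> 0 -> hyperbolic (abel A B) (x 0).
Proof.
  exact (hyperbolic_of_mean_slope _ _ abel_rhs_continuous abel_locally_lipschitz
    abel_difference_quotient abel_quotient_continuous abel_quotient_lipschitz x).
Qed.

Lemma abel_center_of_returns d0 : 0 < d0 ->
  (forall z x, z <> 0 -> Rabs z < d0 -> is_solution (abel A B) x -> x 0 = z -> x 1 = z) ->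
  has_center (abel A B).
Proof.
  intros Hd0. apply (has_center_of_returns _ _ abel_rhs_continuous abel_locally_lipschitz
    abel_difference_quotient abel_quotient_continuous d0 Hd0).
  intros t. unfold abel. ring.
Qed.

Lemma abel_split_nonseparable (alpha f g H P df dg : R -> R) (c : R) :
  (forall t u, abel A B t u = alpha t * f u + c * g u) ->
  (forall u, f u <> 0 -> is_derive H u (/ f u)) -> (forall t, is_derive P t (alpha t)) ->
  (forall u, is_derive f u (df u)) ->
  (forall t u, abel_quotient A B t u u = alpha t * df u + c * dg u) -> c <> 0 ->
  (forall u v, f u <> 0 -> f v <> 0 -> g u / f u = g v / f v -> u = v) ->
  (forall u, f u <> 0 -> dg u * f u <> df u * g u) ->
  (forall x, periodic_orbit (abel A B) x -> nontrivial x -> forall t, 0 <= t <= 1 -> f (x t) <> 0) ->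
  at_most_one_hyperbolic_cycle (abel A B).
Proof.
  intros HF HH HP Hdf Hell Hc Hr HW Hf. split.
  - intros x y Hx Hy Hnx Hny.
    destruct (periodic_orbits_meet _ alpha f g H P c HF HH HP x y Hc Hr Hx Hy (Hf x Hx Hnx) (Hf y Hy Hny))
      as [tau [Htau E]].
    exact (abel_unique x y tau (proj1 Hx) (proj1 Hy) Htau E).
  - intros x Hx Hnx. apply (abel_hyperbolic x (proj1 Hx)).
    apply (mean_linearization_nonzero _ alpha f g c HF df dg (fun t u => abel_quotient A B t u u) x Hc Hdf Hell);
      [| exact Hx | now apply Hf |].
    + apply (mean_slope_continuous _ abel_quotient_continuous); now apply solution_continuous with (abel A B), Hx.
    + intros t Ht. apply HW, (Hf x Hx Hnx t Ht).
Qed.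

End Abel.

Lemma is_derive_opp_inv u : u ^ 2 <> 0 -> is_derive (fun u => - / u) u (/ u ^ 2).
Proof.
  intros Hu. assert (u <> 0) by (intros ->; apply Hu; ring).
  auto_derive; [exact H | field; exact H].
Qed.

Section ConstantCubicCoefficient.
Variables (A B P : R -> R) (a0 : R).
Hypotheses (HB : forall t, continuous B t) (HA0 : forall t, A t = a0) (HP : forall t, is_derive P t (B t)).

Let HA t : continuous A t.
Proof. apply (continuous_ext (fun _ => a0)); [easy | apply continuous_const]. Qed.

Let cubic_split t u : abel A B t u = B t * u ^ 2 + a0 * u ^ 3.
Proof. unfold abel. rewrite HA0. ring. Qed.

Let square_nonzero x : is_solution (abel A B) x -> nontrivial x -> forall t, 0 <= t <= 1 -> x t ^ 2 <> 0.
Proof. intros Hx Hnx t Ht. apply pow_nonzero, (abel_nonvanishing A B HA HB x Hx Hnx t Ht). Qed.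

Lemma constant_cubic_separable : a0 = 0 -> ~ has_center (abel A B) ->
  forall x, periodic_orbit (abel A B) x -> nontrivial x -> False.
Proof.
  intros Ha0 Hnc.
  destruct (Req_dec (P 1) (P 0)) as [HP01 | HP01].
  - exfalso. apply Hnc, (abel_center_of_returns A B HA HB 1); [lra |].
    intros z x Hz _ Hx Hx0. rewrite <- Hx0.
    apply (separable_return _ B (fun u => u ^ 2) (fun u => u ^ 3) (fun u => - / u) P a0 cubic_split
      is_derive_opp_inv HP x Ha0 HP01 Hx).
    apply square_nonzero; [exact Hx |]. exists 0. split; [lra | now rewrite Hx0].
  - intros x [Hx Hper] Hnx. apply HP01.
    assert (E := separable_first_integral _ B (fun u => u ^ 2) (fun u => u ^ 3) (fun u => - / u) P a0 cubic_split
      is_derive_opp_inv HP x Ha0 Hx (square_nonzero x Hx Hnx)).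
    rewrite Hper in E. lra.
Qed.

Lemma constant_cubic_nonseparable : a0 <> 0 -> at_most_one_hyperbolic_cycle (abel A B).
Proof.
  intros Ha0.
  apply (abel_split_nonseparable A B HA HB B (fun u => u ^ 2) (fun u => u ^ 3) (fun u => - / u) P
    (fun u => 2 * u) (fun u => 3 * u ^ 2) a0 cubic_split is_derive_opp_inv HP).
  - intros u. auto_derive; [easy | ring].
  - intros t u. unfold abel_quotient. rewrite HA0. ring.
  - exact Ha0.
  - intros u v Hu Hv E. replace (u ^ 3 / u ^ 2) with u in E by (field; intros ->; apply Hu; ring).
    replace (v ^ 3 / v ^ 2) with v in E by (field; intros ->; apply Hv; ring). exact E.
  - intros u Hu E. apply Hu. assert (Hsq : u ^ 2 * u ^ 2 = 0) by (ring_simplify in E; lra).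
    apply Rmult_integral in Hsq. tauto.
  - intros x Hx Hnx. exact (square_nonzero x (proj1 Hx) Hnx).
Qed.

Theorem abel_constant_cubic_coefficient :
  ~ has_center (abel A B) -> at_most_one_hyperbolic_cycle (abel A B).
Proof.
  intros Hnc. destruct (Req_dec a0 0) as [Ha0 | Ha0].
  - apply at_most_one_hyperbolic_cycle_of_none. now apply constant_cubic_separable.
  - now apply constant_cubic_nonseparable.
Qed.

End ConstantCubicCoefficient.

Definition inv_cubic_primitive (xs u : R) : R :=
  if Req_EM_T xs 0 then - / (2 * u ^ 2)
  else (ln ((u - xs) ^ 2) - ln (u ^ 2)) / (2 * xs ^ 2) + / (xs * u).

Lemma is_derive_inv_cubic_primitive xs u : u ^ 2 * (u - xs) <> 0 ->
  is_derive (inv_cubic_primitive xs) u (/ (u ^ 2 * (u - xs))).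
Proof.
  intros Hf. assert (Hu : u <> 0) by (intros ->; apply Hf; ring).
  assert (Hux : u - xs <> 0) by (intros E; apply Hf; rewrite E; ring).
  assert (0 < u ^ 2) by (rewrite <- Rsqr_pow2; now apply Rsqr_pos_lt).
  unfold inv_cubic_primitive. destruct (Req_EM_T xs 0) as [-> | Hxs].
  - auto_derive; [nra | field; lra].
  - assert (0 < (u - xs) ^ 2) by (rewrite <- Rsqr_pow2; now apply Rsqr_pos_lt).
    auto_derive; [repeat split; try lra; now apply Rmult_integral_contrapositive |].
    field. repeat split; lra.
Qed.

Section ConstantCombination.
Variables (A B P : R -> R) (xs m : R).
Hypotheses (HA : forall t, continuous A t) (HBA : forall t, B t = m - xs * A t)
  (HP : forall t, is_derive P t (A t)).

Let HB t : continuous B t.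
Proof.
  apply (continuous_ext (fun t => m - xs * A t)); [intros; now rewrite HBA |].
  apply (continuous_minus (V := R_NormedModule)); [apply continuous_const |].
  apply continuous_Rmult; [apply continuous_const | apply HA].
Qed.

Let f u := u ^ 2 * (u - xs).

Let cubic_split t u : abel A B t u = A t * f u + m * u ^ 2.
Proof. unfold abel, f. rewrite HBA. ring. Qed.

Let f_nonzero u : u <> 0 -> u <> xs -> f u <> 0.
Proof.
  intros Hu Hux. apply Rmult_integral_contrapositive. split; [now apply pow_nonzero | lra].
Qed.

Lemma constant_combination_separable_center : m = 0 -> P 1 = P 0 -> has_center (abel A B).
Proof.
  intros Hm HP01.
  assert (Hret : forall z x, z <> 0 -> (xs <> 0 -> Rabs z < Rabs xs) -> is_solution (abel A B) x ->
      x 0 = z -> x 1 = z).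
  { intros z x Hz Hzx Hx Hx0. rewrite <- Hx0.
    apply (separable_return _ A f (fun u => u ^ 2) (inv_cubic_primitive xs) P m cubic_split
      (is_derive_inv_cubic_primitive xs) HP x Hm HP01 Hx).
    intros t Ht. apply f_nonzero.
    - apply (abel_nonvanishing A B HA HB x Hx); [| exact Ht]. exists 0. split; [lra | now rewrite Hx0].
    - intros E. assert (Hconst := separable_constant_solution _ A f (fun u => u ^ 2) m cubic_split xs Hm
        ltac:(unfold f; ring)).
      assert (Exs := abel_unique A B HA HB x _ t Hx Hconst Ht E 0 ltac:(lra)).
      rewrite Hx0 in Exs. rewrite Exs in Hz, Hzx. specialize (Hzx Hz). lra. }
  destruct (Req_dec xs 0) as [Hxs | Hxs].
  - apply (abel_center_of_returns A B HA HB 1); [lra |].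
    intros z x Hz _. apply (Hret z x Hz). contradiction.
  - apply (abel_center_of_returns A B HA HB (Rabs xs)); [now apply Rabs_pos_lt |].
    intros z x Hz Hzx. now apply (Hret z x Hz).
Qed.

Lemma constant_combination_separable_orbit : m = 0 -> P 1 <> P 0 ->
  forall x, periodic_orbit (abel A B) x -> nontrivial x -> forall t, 0 <= t <= 1 -> x t = xs.
Proof.
  intros Hm HP01 x [Hx Hper] Hnx.
  destruct (classic (exists t, 0 <= t <= 1 /\ x t = xs)) as [[t0 [Ht0 E]] | Hno].
  - assert (Hconst := separable_constant_solution _ A f (fun u => u ^ 2) m cubic_split xs Hm
      ltac:(unfold f; ring)).
    intros t Ht. exact (abel_unique A B HA HB x _ t0 Hx Hconst Ht0 E t Ht).
  - exfalso. apply HP01.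
    assert (Hf : forall t, 0 <= t <= 1 -> f (x t) <> 0).
    { intros t Ht. apply f_nonzero; [exact (abel_nonvanishing A B HA HB x Hx Hnx t Ht) |].
      intros Ex. apply Hno. now exists t. }
    assert (E := separable_first_integral _ A f (fun u => u ^ 2) (inv_cubic_primitive xs) P m cubic_split
      (is_derive_inv_cubic_primitive xs) HP x Hm Hx Hf).
    rewrite Hper in E. lra.
Qed.

Lemma constant_combination_separable : m = 0 -> ~ has_center (abel A B) ->
  at_most_one_hyperbolic_cycle (abel A B).
Proof.
  intros Hm Hnc. destruct (Req_dec (P 1) (P 0)) as [HP01 | HP01];
    [exfalso; now apply Hnc, constant_combination_separable_center |].
  assert (Horbit := constant_combination_separable_orbit Hm HP01). split.
  - intros x y Hx Hy Hnx Hny t Ht. now rewrite (Horbit x Hx Hnx t Ht), (Horbit y Hy Hny t Ht).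
  - intros x Hx Hnx. rewrite (Horbit x Hx Hnx 0) by lra.
    assert (Hxs : xs <> 0).
    { pose proof Hnx as [t [Ht Hne]]. now rewrite (Horbit x Hx Hnx t Ht) in Hne. }
    apply (abel_hyperbolic A B HA HB (fun _ => xs));
      [exact (separable_constant_solution _ A f (fun u => u ^ 2) m cubic_split xs Hm ltac:(unfold f; ring)) |].
    unfold mean_slope.
    rewrite (mean_linearization_constant A P m HP (fun u => 3 * u ^ 2 - 2 * xs * u) (fun u => 2 * u)
      (fun t u => abel_quotient A B t u u) xs HA); [| intros t u; unfold abel_quotient; rewrite HBA; ring].
    rewrite Hm, Rmult_0_l, Rplus_0_r.
    apply Rmult_integral_contrapositive. split; [| lra].
    replace (3 * xs ^ 2 - 2 * xs * xs) with (xs ^ 2) by ring. now apply pow_nonzero.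
Qed.

Lemma constant_combination_avoids : m <> 0 ->
  forall x, periodic_orbit (abel A B) x -> nontrivial x -> forall t, 0 <= t <= 1 -> f (x t) <> 0.
Proof.
  intros Hm x Hx Hnx t Ht.
  assert (Hx0 := abel_nonvanishing A B HA HB x (proj1 Hx) Hnx t Ht).
  apply f_nonzero; [exact Hx0 |]. destruct (Req_dec xs 0) as [-> | Hxs]; [exact Hx0 |].
  apply (periodic_solution_avoids _ _ (abel_difference_quotient A B) (abel_quotient_continuous A B HA HB)
    x xs m Hx); [| exact Ht].
  intros s _. rewrite cubic_split. unfold f.
  replace (m * (A s * (xs ^ 2 * (xs - xs)) + m * xs ^ 2)) with ((m * xs) ^ 2) by ring.
  rewrite <- Rsqr_pow2. apply Rsqr_pos_lt, Rmult_integral_contrapositive. tauto.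
Qed.

Lemma constant_combination_nonseparable : m <> 0 -> at_most_one_hyperbolic_cycle (abel A B).
Proof.
  intros Hm.
  apply (abel_split_nonseparable A B HA HB A f (fun u => u ^ 2) (inv_cubic_primitive xs) P
    (fun u => 3 * u ^ 2 - 2 * xs * u) (fun u => 2 * u) m cubic_split (is_derive_inv_cubic_primitive xs) HP).
  - intros u. unfold f. auto_derive; [easy | ring].
  - intros t u. unfold abel_quotient. rewrite HBA. ring.
  - exact Hm.
  - intros u v Hu Hv E. unfold f in *.
    assert (Hu0 : u <> 0) by (intros ->; apply Hu; ring).
    assert (Hv0 : v <> 0) by (intros ->; apply Hv; ring).
    assert (Hux : u - xs <> 0) by (intros E'; apply Hu; rewrite E'; ring).
    assert (Hvx : v - xs <> 0) by (intros E'; apply Hv; rewrite E'; ring).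
    replace (u ^ 2 / (u ^ 2 * (u - xs))) with (/ (u - xs)) in E by (field; tauto).
    replace (v ^ 2 / (v ^ 2 * (v - xs))) with (/ (v - xs)) in E by (field; tauto).
    apply Rinv_eq_reg in E. lra.
  - intros u Hu E. unfold f in *. apply Hu.
    assert (Hsq : u ^ 2 * u ^ 2 = 0) by (ring_simplify in E; lra).
    apply Rmult_integral in Hsq. destruct Hsq as [Hsq | Hsq]; rewrite Hsq; ring.
  - exact (constant_combination_avoids Hm).
Qed.

Theorem abel_constant_combination :
  ~ has_center (abel A B) -> at_most_one_hyperbolic_cycle (abel A B).
Proof.
  intros Hnc. destruct (Req_dec m 0) as [Hm | Hm].
  - now apply constant_combination_separable.
  - now apply constant_combination_nonseparable.
Qed.

End ConstantCombination.

Definition trinomial (j k : nat) (c0 c1 c2 t : R) : R := c0 + c1 * t ^ j + c2 * t ^ k.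

Definition trinomial_primitive (j k : nat) (c0 c1 c2 t : R) : R :=
  c0 * t + c1 * t ^ S j / INR (S j) + c2 * t ^ S k / INR (S k).

Lemma trinomial_continuous j k c0 c1 c2 t : continuous (trinomial j k c0 c1 c2) t.
Proof.
  apply (is_derive_continuous _ t (c1 * (INR j * t ^ pred j) + c2 * (INR k * t ^ pred k))).
  unfold trinomial. auto_derive; [easy | ring].
Qed.

Lemma is_derive_trinomial_primitive j k c0 c1 c2 t :
  is_derive (trinomial_primitive j k c0 c1 c2) t (trinomial j k c0 c1 c2 t).
Proof.
  assert (INR (S j) <> 0) by (apply not_0_INR; lia).
  assert (INR (S k) <> 0) by (apply not_0_INR; lia).
  unfold trinomial_primitive, trinomial. auto_derive; [tauto |]. simpl pred. field. tauto.
Qed.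

Theorem corollary1p1 (j k : nat) (a0 a1 a2 b0 b1 b2 : R) :
  (0 < j)%nat -> (j < k)%nat ->
  a1 + a2 = 0 -> b1 + b2 = 0 ->
  ~ has_center (abel_rhs j k a0 a1 a2 b0 b1 b2) ->
  (* at most one non-zero periodic orbit *)
  (forall x y : R -> R,
      periodic_orbit (abel_rhs j k a0 a1 a2 b0 b1 b2) x ->
      periodic_orbit (abel_rhs j k a0 a1 a2 b0 b1 b2) y ->
      (exists t, 0 <= t <= 1 /\ x t <> 0) ->
      (exists t, 0 <= t <= 1 /\ y t <> 0) ->
      forall t, 0 <= t <= 1 -> x t = y t) /\
  (* and it is hyperbolic *)
  (forall x : R -> R,
      periodic_orbit (abel_rhs j k a0 a1 a2 b0 b1 b2) x ->
      (exists t, 0 <= t <= 1 /\ x t <> 0) ->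
      hyperbolic (abel_rhs j k a0 a1 a2 b0 b1 b2) (x 0)).
Proof.
  intros _ _ Ha Hb Hnc.
  change (at_most_one_hyperbolic_cycle (abel (trinomial j k a0 a1 a2) (trinomial j k b0 b1 b2))).
  destruct (Req_dec a1 0) as [Ha1 | Ha1].
  - apply (abel_constant_cubic_coefficient _ _ (trinomial_primitive j k b0 b1 b2) a0);
      [apply trinomial_continuous | | apply is_derive_trinomial_primitive | exact Hnc].
    intros t. unfold trinomial. replace a2 with 0 by lra. rewrite Ha1. ring.
  - apply (abel_constant_combination _ _ (trinomial_primitive j k a0 a1 a2) (- b1 / a1) (a0 * (- b1 / a1) + b0));
      [apply trinomial_continuous | | apply is_derive_trinomial_primitive | exact Hnc].
    intros t. unfold trinomial. replace a2 with (- a1) by lra. replace b2 with (- b1) by lra.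
    field. exact Ha1.
Qed.
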